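(* Let $(X,d,\kappa)$ be a complete digital metric space where $d$ is an $\ell_p$ metric for some $1\le p\le\infty$, and let $T:X\to X$ be a weakly uniformly strict digital contraction. Then $T$ has a unique fixed point $z$. Moreover, for every $x\in X$, $\lim_{n\to\infty}T^n(x)=z$.
   Context: A digital metric space is a triple $(X,d,\kappa)$ where $X\subset\mathbb{Z}^n$ for some positive integer $n$, $\kappa$ is an adjacency relation on $X$, and $d$ is a metric on $X$. The $\ell_p$ metric on $\mathbb{Z}^n$ is $d(x,y)=(\sum_i|x_i-y_i|^p)^{1/p}$ for $1\le p<\infty$ and $\max_i|x_i-y_i|$ for $p=\infty$. $T:X\to X$ is a weakly uniformly strict digital contraction if for every $\varepsilon>0$ there exists $\delta>0$ such that for all $x,y\in X$, $\varepsilon\le d(x,y)<\varepsilon+\delta$ implies $d(T(x),T(y))<\varepsilon$. $T^n$ denotes the $n$-fold composition of $T$. *)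

From HB Require Import structures.
From mathcomp Require Import all_boot all_order all_algebra.
From mathcomp Require Import all_classical all_reals all_analysis.
Set Implicit Arguments. Unset Strict Implicit. Unset Printing Implicit Defensive.
Import Order.TTheory GRing.Theory Num.Theory.
Local Open Scope ring_scope.

Definition zpoint (n : nat) := 'I_n -> int.

(* The l_p metric on Z^n, for p in [1, +oo] encoded as an extended real.
   For finite p : (sum_i |x_i - y_i|^p)^(1/p); for p = +oo : max_i |x_i - y_i|. *)
Definition lp_dist (R : realType) (n : nat) (p : \bar R) (x y : zpoint n) : R :=
  match p with
  | EFin r => (\sum_(i < n) (`|(x i - y i)%:~R| : R) `^ r) `^ r^-1
  | _ => \big[Num.max/0]_(i < n) (`|(x i - y i)%:~R| : R)
  end.

Definition dconverges (P : Type) (R : realType) (d : P -> P -> R)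
    (u : nat -> P) (z : P) : Prop :=
  forall eps : R, 0 < eps -> exists N : nat, forall k, (N <= k)%N -> d (u k) z < eps.

Definition dcauchy (P : Type) (R : realType) (d : P -> P -> R) (u : nat -> P) : Prop :=
  forall eps : R, 0 < eps -> exists N : nat, forall k m, (N <= k)%N -> (N <= m)%N ->
    d (u k) (u m) < eps.

Definition dcomplete (P : Type) (R : realType) (X : set P) (d : P -> P -> R) : Prop :=
  forall u : nat -> P, (forall k, X (u k)) -> dcauchy d u ->
    exists2 z, X z & dconverges d u z.

Definition weakly_uniformly_strict_contraction (P : Type) (R : realType)
    (X : set P) (d : P -> P -> R) (T : P -> P) : Prop :=
  forall eps : R, 0 < eps -> exists2 delta : R, 0 < delta &
    forall x y, X x -> X y -> eps <= d x y -> d x y < eps + delta ->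
      d (T x) (T y) < eps.

(* Distinct points of Z^n are at l_p distance at least 1, so T cannot move a
   point along an orbit forever: if d(T^k x, T^(k+1) x) >= 1 for all k, let e
   be the infimum of these distances; some step lies in [e, e + delta), so the
   next step is < e, which is absurd. Hence every orbit becomes stationary at a
   fixed point, and two fixed points w <> z would give d(w, z) < d(w, z). *)

From HB Require Import structures.
From mathcomp Require Import all_boot all_order all_algebra.
From mathcomp Require Import all_classical all_reals all_analysis.
Set Implicit Arguments. Unset Strict Implicit. Unset Printing Implicit Defensive.
Import Order.TTheory GRing.Theory Num.Theory.
Local Open Scope ring_scope.

Section UniformlyDiscreteContraction.

Variables (P : Type) (R : realType) (X : set P) (d : P -> P -> R) (T : P -> P).
Variable r : R.
Hypothesis r_gt0 : 0 < r.
Hypothesis d_sep : forall x y, x <> y -> r <= d x y.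
Hypothesis XT : forall x, X x -> X (T x).
Hypothesis contrT : weakly_uniformly_strict_contraction X d T.

Lemma X_iter k x : X x -> X (iter k T x).
Proof. by move=> Xx; elim: k => //= k /XT. Qed.

Lemma wusc_fixed_point_unique w z :
  X w -> X z -> T w = w -> T z = z -> w = z.
Proof.
move=> Xw Xz Tw Tz; apply: contrapT => /d_sep r_le_wz.
have [e e_gt0 contr_wz] := contrT (lt_le_trans r_gt0 r_le_wz).
have := contr_wz w z Xw Xz (lexx _); rewrite ltrDl e_gt0 Tw Tz ltxx.
by move/(_ isT).
Qed.

Lemma wusc_orbit_reaches_fixed_point x :
  X x -> exists k, T (iter k T x) = iter k T x.
Proof.
move=> Xx; apply: contrapT => no_fixed.
pose step k := d (iter k T x) (iter k.+1 T x).
have step_ge k : r <= step k.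
  by apply: d_sep => /esym Tk; apply: no_fixed; exists k.
have steps_ne : nonempty (range step) by exists (step 0%N), 0%N.
have steps_lb : has_lbound (range step) by exists r => _ [k _ <-].
have steps_inf_ge : r <= inf (range step) by apply: lb_le_inf => // _ [k _ <-].
have [e e_gt0 contr_step] := contrT (lt_le_trans r_gt0 steps_inf_ge).
have [_ [k _ <-] step_lt] := inf_adherent e_gt0 (conj steps_ne steps_lb).
have inf_le k' : inf (range step) <= step k'.
  by have := ge_inf steps_lb (ex_intro2 _ _ k' I erefl).
have := contr_step _ _ (X_iter k Xx) (X_iter k.+1 Xx) (inf_le k) step_lt.
by move/(le_lt_trans (inf_le k.+1)); rewrite ltxx.
Qed.

Lemma uniformly_discrete_wusc_fixed_point :
  (forall x, d x x = 0) -> (exists x0, X x0) ->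
  exists z, [/\ X z, T z = z,
    (forall w, X w -> T w = w -> w = z) &
    (forall x, X x -> dconverges d (fun k => iter k T x) z)].
Proof.
move=> d_xx [x0 Xx0].
have [k0 fixed_k0] := wusc_orbit_reaches_fixed_point Xx0.
have Xz := X_iter k0 Xx0.
exists (iter k0 T x0); split=> // [w Xw Tw|x Xx e e_gt0].
  exact: wusc_fixed_point_unique.
have [k fixed_k] := wusc_orbit_reaches_fixed_point Xx.
exists k => m le_km; rewrite -(subnK le_km) iterD iter_fix //.
by rewrite (wusc_fixed_point_unique (X_iter k Xx) Xz fixed_k fixed_k0) d_xx.
Qed.

End UniformlyDiscreteContraction.

Lemma lp_distxx (R : realType) (n : nat) (p : \bar R) (x : zpoint n) :
  (1 <= p)%E -> lp_dist p x x = 0.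
Proof.
case: p => [s| |] //= s_ge1; last first.
  apply: (big_ind (eq^~ 0)) => //; first by move=> a b -> ->; rewrite maxxx.
  by move=> i _; rewrite subrr normr0.
have s_neq0 : s != 0 by rewrite gt_eqF // (lt_le_trans ltr01 s_ge1).
rewrite big1 ?powR0 ?invr_eq0 // => i _.
by rewrite subrr normr0 powR0.
Qed.

Lemma lp_dist_ge1 (R : realType) (n : nat) (p : \bar R) (x y : zpoint n) :
  (1 <= p)%E -> x <> y -> 1 <= lp_dist p x y.
Proof.
move=> p_ge1 x_neq_y.
have [i xy_i] : exists i, x i != y i.
  apply: contrapT => all_eq; apply/x_neq_y/funext => i.
  by apply/eqP/negPn/negP => xy_i; apply: all_eq; exists i.
have dist_i_ge1 : 1 <= (`|(x i - y i)%:~R| : R).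
  by rewrite -intr_norm ler1z -gtz0_ge1 normr_gt0 subr_eq0.
case: p p_ge1 => [s| |] //= s_ge1; last exact: le_trans dist_i_ge1 (le_bigmax _ _ _).
have s_ge0 : 0 <= s by rewrite (le_trans ler01).
have sum_ge1 : 1 <= \sum_(j < n) (`|(x j - y j)%:~R| : R) `^ s.
  rewrite (bigD1 i) //= -[leLHS]addr0 lerD //; last first.
    by apply: sumr_ge0 => j _; apply: powR_ge0.
  by have := ler_powR dist_i_ge1 s_ge0; rewrite powRr0.
have s_inv_ge0 : 0 <= s^-1 by rewrite invr_ge0.
by have := ler_powR sum_ge1 s_inv_ge0; rewrite powRr0.
Qed.

Theorem theorem8p9 (R : realType) (n : nat) (X : set (zpoint n))
    (kappa : zpoint n -> zpoint n -> Prop) (p : \bar R)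
    (T : zpoint n -> zpoint n) :
  (0 < n)%N ->
  (1 <= p)%E ->
  (exists x0, X x0) ->
  dcomplete X (lp_dist p) ->
  (forall x, X x -> X (T x)) ->
  weakly_uniformly_strict_contraction X (lp_dist p) T ->
  exists z, [/\ X z, T z = z,
    (forall w, X w -> T w = w -> w = z) &
    (forall x, X x -> dconverges (lp_dist p) (fun k => iter k T x) z)].
Proof.
move=> _ p_ge1 X_nonempty _ XT contrT.
apply: (uniformly_discrete_wusc_fixed_point ltr01 _ XT contrT) => //.
- by move=> x y; apply: lp_dist_ge1.
- by move=> x; apply: lp_distxx.
Qed.
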